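(* Let $d\ge 2$ and let $f$ be a monic centered polynomial of degree $d^2$. Then the following are equivalent: (1) $f(z)=(z^d+a)^d+b$ for some $a\in\mathbb{C}\setminus\{0\}$ and $b\in\mathbb{C}$; (2) $f$ has exactly $d+1$ distinct critical points $\alpha_1,\dots,\alpha_{d+1}$, with local degree $\deg_{\alpha_i}(f)=d$ for each $i$, and such that $f(\alpha_1)=f(\alpha_2)=\cdots=f(\alpha_d)$.
   Context: A polynomial is monic if its leading coefficient is $1$ and centered if the coefficient of the second highest degree term is $0$ (equivalently, the sum of its critical points, with multiplicity, is $0$). The local degree $\deg_\alpha(f)$ is the multiplicity with which $f$ takes the value $f(\alpha)$ at $\alpha$. *)

From HB Require Import structures.
From mathcomp Require Import all_boot all_order all_algebra.
Set Implicit Arguments. Unset Strict Implicit. Unset Printing Implicit Defensive.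
Import GRing.Theory Num.Theory.
Local Open Scope ring_scope.

Definition centered (R : nzRingType) (f : {poly R}) : Prop :=
  f`_((size f).-2) = 0.

Definition local_deg (R : fieldType) (f : {poly R}) (alpha : R) : nat :=
  mup alpha (f - (f.[alpha])%:P).

Definition critical_point (R : nzRingType) (f : {poly R}) (z : R) : bool :=
  root f^`() z.

From HB Require Import structures.
From mathcomp Require Import all_boot all_order all_algebra.
From mathcomp Require Import zify ring.
Import GRing.Theory Num.Theory.

Set Implicit Arguments.
Unset Strict Implicit.
Unset Printing Implicit Defensive.

Local Open Scope ring_scope.

(* If f = (z^d + a)^d + b, then f' = d^2 z^(d-1) (z^d + a)^(d-1), so the critical
   points are 0 and the d roots of z^d + a, which are simple since a != 0; f - b
   vanishes to order d at these roots and f - f(0) to order d at 0.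
   Conversely, if alpha_1, ..., alpha_d lie on a common level c of f with local
   degree d, then f - c = g^d with g = (z - alpha_1) ... (z - alpha_d) by degree
   count.  Since alpha_(d+1) is no root of g, its local degree d forces
   (z - alpha_(d+1))^(d-1) to divide g', hence g = (z - alpha_(d+1))^d + a, and
   centering gives alpha_(d+1) = 0; finally a != 0 as the alpha_i are distinct. *)

Lemma mup_exp (F : fieldType) (x : F) (p : {poly F}) n :
  p != 0 -> mup x (p ^+ n) = (mup x p * n)%N.
Proof.
move=> p0; elim: n => [|n IHn]; first by rewrite expr0 muln0 mupNroot ?root1.
by rewrite exprS mupM ?expf_neq0 // IHn mulnS.
Qed.

Lemma dvdp_deriv_XsubC_exp (F : fieldType) (x : F) (p : {poly F}) k :
  ('X - x%:P) ^+ k.+1 %| p -> ('X - x%:P) ^+ k %| p^`().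
Proof.
case/dvdpP => q ->; rewrite derivM deriv_exp derivXsubC mul1r.
apply: dvdp_add; first by rewrite exprS mulrA dvdp_mulIr.
by rewrite -mulr_natr mulrA dvdp_mulr ?dvdp_mulIr.
Qed.

Lemma deriv_eq0_size (R : numDomainType) (p : {poly R}) :
  p^`() = 0 -> (size p <= 1)%N.
Proof.
move=> p'0; apply/leq_sizeP => -[|i] // _; apply/eqP.
by have /eqP := coef_deriv p i; rewrite p'0 coef0 eq_sym mulrn_eq0.
Qed.

Lemma size_sub_monic (R : nzRingType) (p q : {poly R}) :
  p \is monic -> q \is monic -> size p = size q -> (size (p - q)%R < size p)%N.
Proof.
move=> mp mq spq; have sp := polySpred (monic_neq0 mp).
rewrite [X in (_ < X)%N]sp ltnS; apply/leq_sizeP => j hj; rewrite coefB.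
have [->|jn] := eqVneq j (size p).-1.
  rewrite -lead_coefE (monicP mp) [in X in _ - X]spq -lead_coefE.
  by rewrite (monicP mq) subrr.
have le_pj : (size p <= j)%N by rewrite sp ltn_neqAle eq_sym jn hj.
by rewrite !nth_default ?subr0 -?spq.
Qed.

Lemma monic_subC (R : nzRingType) (p : {poly R}) c :
  p \is monic -> (1 < size p)%N -> p - c%:P \is monic.
Proof.
move=> mp sp; rewrite monicE lead_coefDl ?(monicP mp) // size_polyN.
exact: leq_ltn_trans (size_polyC_leq1 c) sp.
Qed.

Lemma coef_sublead_mul (R : comNzRingType) (p q : {poly R}) :
  p \is monic -> q \is monic -> (1 < size p)%N -> (1 < size q)%N ->
  (p * q)`_(size (p * q)).-2 = p`_(size p).-2 + q`_(size q).-2.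
Proof.
move=> mp mq sp2 sq2; rewrite size_Mmonic ?monic_neq0 //.
have sp : size p = (size p).-2.+2 by lia.
have sq : size q = (size q).-2.+2 by lia.
move: (size p).-2 (size q).-2 sp sq => m n sp sq; rewrite sp sq.
have le_r : (size (p - 'X^(m.+1))%R <= m.+1)%N.
  by rewrite -ltnS -sp size_sub_monic ?monicXn ?size_polyXn.
have le_s : (size (q - 'X^(n.+1))%R <= n.+1)%N.
  by rewrite -ltnS -sq size_sub_monic ?monicXn ?size_polyXn.
set r := p - 'X^(m.+1) in le_r *; set s := q - 'X^(n.+1) in le_s *.
have -> : p * q = 'X^(m.+1 + n.+1) + 'X^(m.+1) * s + r * 'X^(n.+1) + r * s.
  by rewrite exprD /r /s; ring.
have rs0 : (r * s)`_(m + n).+1 = 0.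
  by apply: nth_default; apply: leq_trans (size_polyMleq r s) _; lia.
rewrite (_ : (m + n.+2).-1 = (m + n).+1)%N ?addnS //.
rewrite !coefD rs0 addr0 coefXn coefXnM coefMXn.
have -> : ((m + n).+1 == (m.+1 + n).+1)%N = false by lia.
rewrite !ifF; [|lia|lia].
rewrite (_ : ((m + n).+1 - m.+1 = n)%N) 1?(_ : ((m + n).+1 - n.+1 = m)%N); [|lia|lia].
rewrite /r /s !coefB !coefXn.
have -> : (n == n.+1)%N = false by lia.
have -> : (m == m.+1)%N = false by lia.
by rewrite !subr0 add0r addrC.
Qed.

Lemma coef_sublead_exp (R : idomainType) (q : {poly R}) k :
  q \is monic -> (1 < size q)%N ->
  (q ^+ k.+1)`_(size (q ^+ k.+1)).-2 = q`_(size q).-2 *+ k.+1.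
Proof.
move=> mq sq; elim: k => [|k IHk]; first by rewrite expr1.
have sqk : (1 < size (q ^+ k.+1))%N.
  by rewrite -ltn_predRL size_exp muln_gt0 ltn_predRL sq.
by rewrite exprS coef_sublead_mul ?monic_exp // IHk [RHS]mulrS.
Qed.

Lemma centered_exp (R : numDomainType) (q : {poly R}) k :
  q \is monic -> (1 < size q)%N -> (0 < k)%N -> centered (q ^+ k) <-> centered q.
Proof.
move=> mq sq; case: k => // k _; rewrite /centered coef_sublead_exp //.
by split=> [/eqP|->]; rewrite ?mul0rn // mulrn_eq0 => /eqP.
Qed.

Lemma centered_addC (R : nzRingType) (p : {poly R}) c :
  (2 < size p)%N -> centered (p + c%:P) <-> centered p.
Proof.
move=> sp; have le_cp := leq_ltn_trans (size_polyC_leq1 c) (ltnW sp).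
rewrite /centered size_polyDl // coefD coefC.
have -> : ((size p).-2 == 0)%N = false by lia.
by rewrite addr0.
Qed.

Lemma centered_XsubC (R : nzRingType) (b : R) : centered ('X - b%:P) <-> b = 0.
Proof.
rewrite /centered size_XsubC coefB coefX coefC sub0r.
by split=> [/eqP|->]; rewrite ?oppr0 // oppr_eq0 => /eqP.
Qed.

Lemma mup_XnaddC_root (F : numFieldType) n (a r : F) :
  (0 < n)%N -> a != 0 -> root ('X^n + a%:P) r -> mup r ('X^n + a%:P) = 1%N.
Proof.
move=> n_gt0 a0 Gr; have G_neq0 := monic_neq0 (monicXnaddC a n_gt0).
apply/eqP; rewrite eqn_leq mup_leq // mup_geq // expr1 dvdp_XsubCl Gr andbT.
apply/negP => /dvdp_deriv_XsubC_exp; rewrite expr1 dvdp_XsubCl /root.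
rewrite derivD derivC addr0 derivXn hornerMn hornerXn mulrn_eq0 expf_eq0 gtn_eqF //=.
case/andP => _ /eqP r0; move: Gr; rewrite r0 /root hornerD hornerXn hornerC.
by rewrite expr0n gtn_eqF // add0r (negbTE a0).
Qed.

Lemma mup0_XnaddC_exp_subC (F : numFieldType) (a : F) m n :
  (0 < m)%N -> (0 < n)%N -> a != 0 ->
  mup 0 (('X^m + a%:P) ^+ n - (a ^+ n)%:P) = m.
Proof.
move=> m_gt0 n_gt0 a0; rewrite polyC_exp subrXX addrK mupMl.
  by rewrite -[X in X ^+ m]subr0 -polyC0 mup_XsubCX eqxx.
rewrite /root horner_sum (eq_bigr (fun _ => a ^+ n.-1)) => [|i _].
  by rewrite sumr_const card_ord mulrn_eq0 expf_eq0 (negbTE a0) andbF gtn_eqF.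
rewrite hornerM !horner_exp hornerD hornerXn !hornerC expr0n gtn_eqF // add0r.
by rewrite -exprD subnK // -ltnS prednK.
Qed.

Lemma root_deriv_XnaddC_exp_addC (R : numDomainType) (a b z : R) m n :
  (1 < m)%N -> (1 < n)%N ->
  root ((('X^m + a%:P) ^+ n + b%:P)^`()) z = (z == 0) || root ('X^m + a%:P) z.
Proof.
move=> m_gt1 n_gt1; rewrite derivD derivC addr0 deriv_exp derivD derivC addr0 derivXn.
rewrite /root hornerMn hornerM hornerMn hornerXn horner_exp.
rewrite !(mulrn_eq0, mulf_eq0, expf_eq0) !gtn_eqF ?(ltnW m_gt1) ?(ltnW n_gt1) //=.
by rewrite -!subn1 !subn_gt0 m_gt1 n_gt1.
Qed.

Lemma XnaddC_uniq_roots (F : numClosedFieldType) n (a : F) :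
  (0 < n)%N -> a != 0 ->
  exists rs, [/\ uniq rs, size rs = n & forall z, root ('X^n + a%:P) z = (z \in rs)].
Proof.
move=> n_gt0 a0; have [rs rsE] := closed_field_poly_normal ('X^n + a%:P).
rewrite lead_coefXnaddC // scale1r in rsE.
have rsP z : root ('X^n + a%:P) z = (z \in rs) by rewrite rsE root_prod_XsubC.
exists rs; split=> //.
  apply: count_mem_uniq => z; rewrite -mu_prod_XsubC -rsE -rsP.
  by have [/(mup_XnaddC_root n_gt0 a0)->|/mupNroot->] := boolP (root _ z).
by have := size_XnaddC a n_gt0; rewrite rsE size_prod_XsubC => -[].
Qed.

Lemma critical_points_XnaddC_exp_addC (F : numClosedFieldType) d (a b : F) :
  (2 <= d)%N -> a != 0 ->
  let f := ('X ^+ d + a%:P) ^+ d + b%:P in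
  exists alpha : 'I_d.+1 -> F,
    [/\ injective alpha,
        forall z, critical_point f z <-> exists i, z = alpha i,
        forall i, local_deg f (alpha i) = d &
        forall i j : 'I_d.+1, (i < d)%N -> (j < d)%N -> f.[alpha i] = f.[alpha j]].
Proof.
move=> d_gt1 a0 f; have d_gt0 := ltnW d_gt1.
have [rs [urs srs rsP]] := XnaddC_uniq_roots d_gt0 a0.
set G := 'X^d + a%:P in rsP f *.
have G0 : G.[0] = a by rewrite hornerD hornerXn hornerC expr0n gtn_eqF // add0r.
have f_root z : root G z -> f.[z] = b.
  by move/eqP => Gz; rewrite hornerD horner_exp Gz expr0n gtn_eqF // add0r hornerC.
pose s := rcons rs 0.
have us : uniq s by rewrite rcons_uniq -rsP /root G0 a0.
have ss : size s = d.+1 by rewrite size_rcons srs.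
have sP z : (z \in s) = (z == 0) || root G z by rewrite mem_rcons in_cons rsP.
exists (fun i => s`_i); split.
- by move=> i j /eqP; rewrite nth_uniq ?ss // => /eqP /val_inj.
- move=> z; rewrite /critical_point root_deriv_XnaddC_exp_addC // -sP.
  split=> [/(nthP 0) [i i_lt <-]|[i ->]]; last by rewrite mem_nth ?ss.
  by rewrite ss in i_lt; exists (Ordinal i_lt).
- move=> i; have /[!sP] /orP [/eqP->|Gsi] : s`_i \in s by rewrite mem_nth ?ss.
    rewrite /local_deg hornerD horner_exp G0 hornerC polyCD opprD addrACA subrr addr0.
    exact: mup0_XnaddC_exp_subC.
  rewrite /local_deg f_root // addrK mup_exp ?monic_neq0 ?monicXnaddC //.
  by rewrite mup_XnaddC_root ?mul1n.
- by move=> i j i_lt j_lt; rewrite !nth_rcons srs i_lt j_lt !f_root ?rsP ?mem_nth ?srs.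
Qed.

Lemma dvdp_prod_XsubC_exp (F : fieldType) (s : seq F) (p : {poly F}) k :
  uniq s -> (forall z, z \in s -> ('X - z%:P) ^+ k %| p) ->
  (\prod_(z <- s) ('X - z%:P)) ^+ k %| p.
Proof.
elim: s => [|z s IHs] /=; first by rewrite big_nil expr1n dvd1p.
case/andP => zs us dvd_p; rewrite big_cons exprMn Gauss_dvdp.
  by rewrite dvd_p ?mem_head // IHs // => y ys; apply: dvd_p; rewrite inE ys orbT.
by rewrite coprimep_expl // coprimep_expr // coprimep_sym coprimep_XsubC root_prod_XsubC.
Qed.

Lemma eq_prod_XsubC_exp_addC (F : fieldType) (s : seq F) (f : {poly F}) c k :
  f \is monic -> uniq s -> size f = (size s * k).+1 -> (0 < size s * k)%N ->
  (forall z, z \in s -> (k <= mup z (f - c%:P))%N) ->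
  f = (\prod_(z <- s) ('X - z%:P)) ^+ k + c%:P.
Proof.
move=> mf us sf sk_gt0 mup_ge; set g := \prod_(z <- s) _.
have le_cf : (size c%:P < size f)%N.
  by rewrite sf ltnS (leq_trans (size_polyC_leq1 c)).
have mfc : f - c%:P \is monic by rewrite monic_subC // sf ltnS.
have mgk : g ^+ k \is monic by rewrite monic_exp ?monic_prod_XsubC.
have sgk : size (g ^+ k) = size (f - c%:P).
  rewrite size_polyDl ?size_polyN // sf (polySpred (monic_neq0 mgk)).
  by rewrite size_exp size_prod_XsubC.
have dvd_gk : g ^+ k %| f - c%:P.
  by apply: dvdp_prod_XsubC_exp => // z /mup_ge; rewrite mup_geq ?monic_neq0.
apply/eqP; rewrite -subr_eq eq_sym -eqp_monic //.
by rewrite -dvdp_size_eqp // sgk.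
Qed.

Lemma dvdp_deriv_of_exp_addC (F : numFieldType) (g : {poly F}) b c k :
  ~~ root g b -> ('X - b%:P) ^+ k.+1 %| g ^+ k.+1 + c%:P ->
  ('X - b%:P) ^+ k %| g^`().
Proof.
move=> gb /dvdp_deriv_XsubC_exp; rewrite derivD derivC addr0 deriv_exp /=.
rewrite -scaler_nat dvdpZr ?pnatr_eq0 // Gauss_dvdpl //.
by rewrite coprimep_expl // coprimep_expr // coprimep_sym coprimep_XsubC.
Qed.

Lemma monic_eq_XsubC_exp_addC (F : numFieldType) (g : {poly F}) b n :
  g \is monic -> size g = n.+1 -> (0 < n)%N -> ('X - b%:P) ^+ n.-1 %| g^`() ->
  g = ('X - b%:P) ^+ n + (g.[b])%:P.
Proof.
move=> mg sg n_gt0 dvd_g'; set h := g - ('X - b%:P) ^+ n.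
have lt_h : (size h < n.+1)%N.
  by rewrite -sg size_sub_monic ?monic_exp ?monicXsubC ?size_exp_XsubC.
have h'0 : h^`() = 0.
  apply/eqP; apply: contraTT lt_h => h'_neq0; rewrite -leqNgt.
  have h_neq0 : h != 0 by apply: contraNneq h'_neq0 => ->; rewrite deriv0.
  have dvd_h' : ('X - b%:P) ^+ n.-1 %| h^`().
    rewrite derivB deriv_exp derivXsubC mul1r dvdp_sub //.
    by rewrite -mulr_natr dvdp_mulr.
  have := dvdp_leq h'_neq0 dvd_h'; rewrite size_exp_XsubC prednK //.
  by move/leq_ltn_trans; apply; exact: lt_size_deriv.
have hE := size1_polyC (deriv_eq0_size h'0).
have gE : g = ('X - b%:P) ^+ n + h by rewrite addrC subrK.
rewrite {1}gE hE; congr (_ + _%:P).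
rewrite gE hornerD horner_exp hornerXsubC subrr expr0n eqn0Ngt n_gt0 add0r.
by rewrite [in RHS]hE hornerC.
Qed.

Lemma centered_monic_eq_XnaddC (F : numFieldType) (g : {poly F}) b d :
  (1 < d)%N -> g \is monic -> size g = d.+1 -> centered g ->
  ('X - b%:P) ^+ d.-1 %| g^`() -> g = 'X^d + (g.[0])%:P.
Proof.
move=> d_gt1 mg sg cg dvd_g'; have d_gt0 := ltnW d_gt1.
have gE := monic_eq_XsubC_exp_addC mg sg d_gt0 dvd_g'.
suff b0 : b = 0 by rewrite b0 polyC0 subr0 in gE.
move: cg; rewrite gE centered_addC ?size_exp_XsubC //.
rewrite centered_exp ?monicXsubC ?size_XsubC //.
by move/centered_XsubC.
Qed.

Lemma XnaddC_exp_addC_of_critical (F : numFieldType) d (f : {poly F})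
    (alpha : 'I_d.+1 -> F) :
  (2 <= d)%N -> f \is monic -> centered f -> size f = (d ^ 2).+1 ->
  injective alpha -> (forall i, local_deg f (alpha i) = d) ->
  (forall i j : 'I_d.+1, (i < d)%N -> (j < d)%N -> f.[alpha i] = f.[alpha j]) ->
  exists a b : F, a != 0 /\ f = ('X ^+ d + a%:P) ^+ d + b%:P.
Proof.
move=> d_gt1 mf cf sf alpha_inj alpha_deg alpha_val; have d_gt0 := ltnW d_gt1.
pose w (i : 'I_d) := alpha (widen_ord (leqnSn d) i).
have w_inj : injective w by move=> i j /alpha_inj/(congr1 val) ij; apply: val_inj.
set s := map w (enum 'I_d); set c := f.[alpha ord0].
have ss : size s = d by rewrite size_map size_enum_ord.
have fE : f = (\prod_(z <- s) ('X - z%:P)) ^+ d + c%:P.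
  apply: eq_prod_XsubC_exp_addC => //; rewrite ?ss ?mulnn ?muln_gt0 ?d_gt0 //.
    by rewrite map_inj_uniq ?enum_uniq.
  move=> _ /mapP [i _ ->]; have := alpha_deg (widen_ord (leqnSn d) i).
  by rewrite /local_deg (alpha_val _ ord0) //= => ->.
set g := \prod_(z <- s) _ in fE.
have mg : g \is monic by apply: monic_prod_XsubC.
have sg : size g = d.+1 by rewrite size_prod_XsubC ss.
have cg : centered g.
  move: cf; rewrite fE centered_addC ?centered_exp // ?sg //.
  by rewrite (polySpred (monic_neq0 (monic_exp d mg))) size_exp sg mulnn; lia.
set b := alpha ord_max.
have gb : ~~ root g b.
  rewrite root_prod_XsubC; apply/mapP => -[i _ /alpha_inj /(congr1 val) /=].
  by move/eqP; rewrite gtn_eqF.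
have dvd_g' : ('X - b%:P) ^+ d.-1 %| g^`().
  apply: (dvdp_deriv_of_exp_addC (c := c - f.[b])) => //; rewrite prednK //.
  rewrite polyCB addrA -fE -mup_geq; last first.
    by rewrite monic_neq0 // monic_subC // sf ltnS expn_gt0 d_gt0.
  by have := alpha_deg ord_max; rewrite /local_deg => ->.
have gE := centered_monic_eq_XnaddC d_gt1 mg sg cg dvd_g'.
exists g.[0], c; split; last by rewrite fE {1}gE.
apply/negP => /eqP g00; rewrite g00 addr0 in gE.
have w0 i : w i = 0.
  have : root g (w i) by rewrite root_prod_XsubC map_f ?mem_enum.
  by rewrite gE rootE hornerXn expf_eq0 => /andP[_ /eqP].
suff /(congr1 val) : Ordinal d_gt0 = Ordinal d_gt1 by [].
by apply: w_inj; rewrite !w0.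
Qed.

Theorem lemma3p1 (C : numClosedFieldType) (d : nat) (f : {poly C}) :
  (2 <= d)%N ->
  f \is monic -> centered f -> size f = (d ^ 2).+1 ->
  (exists a b : C, a != 0 /\ f = ('X ^+ d + a%:P) ^+ d + b%:P)
  <->
  (exists alpha : 'I_d.+1 -> C,
     injective alpha /\
     (forall z : C, critical_point f z <-> exists i, z = alpha i) /\
     (forall i, local_deg f (alpha i) = d) /\
     (forall i j : 'I_d.+1, (i < d)%N -> (j < d)%N ->
        f.[alpha i] = f.[alpha j])).
Proof.
move=> d_gt1 mf cf sf; split.
- case=> a [b [a0 ->]].
  have [alpha [alpha_inj alpha_crit alpha_deg alpha_val]] :=
    critical_points_XnaddC_exp_addC b d_gt1 a0.
  by exists alpha.
- (* the converse does not need that alpha lists all critical points *)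
  case=> alpha [alpha_inj [_ [alpha_deg alpha_val]]].
  exact: XnaddC_exp_addC_of_critical alpha_inj alpha_deg alpha_val.
Qed.
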